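(* For positive integers $n$, $k$ and $r$, \[S_{\leq m}(n,k,r)=\sum_{i=r}^{n}{n\choose i}{i\brace r}_{\leq m}{n-i\brace k-1}_{\leq m}(k-1)!\text{.}\]
   Context: $S_{\leq m}(n,k,r)$ (mixed restricted Stirling number of the second kind) is the number of ways to distribute the elements of $[n]$ into non-empty cells, where there are $r$ cells carrying the label $1$ (indistinguishable among themselves) and one cell each with labels $2,\dots,k$, such that every cell contains at most $m$ elements. ${n\brace k}_{\leq m}$ is the number of partitions of $[n]$ into $k$ non-empty blocks each of size at most $m$. *)

From mathcomp Require Import all_boot.
Set Implicit Arguments. Unset Strict Implicit. Unset Printing Implicit Defensive.

(* {n brace k}_{<= m}: partitions of [n] = 'I_n into k non-empty blocks
   (MathComp's [partition] excludes the empty block) each of size <= m. *)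
Definition rstirling (m n k : nat) : nat :=
  #|[set P : {set {set 'I_n}} |
      [&& partition P [set: 'I_n], #|P| == k & [forall B in P, #|B| <= m]]]|.

(* A distribution of [n] into r cells labelled 1 (indistinguishable) and
   one cell each with labels 2..k, all non-empty of size <= m, is encoded as
   a pair (g, P): g x = None means x lies in a label-1 cell, g x = Some j
   (j : 'I_(k-1)) means x lies in the cell with label j+2; P is the set
   partition of the label-1 elements into the r (unordered) label-1 cells. *)
Definition mixed_distribution (m n k r : nat)
    (gP : {ffun 'I_n -> option 'I_(k - 1)} * {set {set 'I_n}}) : bool :=
  let g := gP.1 in let P := gP.2 in
  [&& partition P [set x | g x == None], #|P| == r,
      [forall B in P, #|B| <= m] &
      [forall j : 'I_(k - 1),
         (0 < #|[set x | g x == Some j]|) && (#|[set x | g x == Some j]| <= m)]].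

Definition mixed_rstirling (m n k r : nat) : nat :=
  #|[set gP | @mixed_distribution m n k r gP]|.

From mathcomp Require Import all_boot.
Set Implicit Arguments. Unset Strict Implicit. Unset Printing Implicit Defensive.

(* Once the None-fibre A,
   of size i, is fixed, the partition contributes a factor {i brace r}, and
   the labelling of the complement is determined by its fibres: an injective
   map from the k-1 labels onto the blocks of a bounded partition of ~: A, so
   each such partition is obtained (k-1)! times.  Summing over the 'C(n, i)
   sets A of size i gives the formula; the terms with i < r vanish. *)

Definition bounded_partitions (T : finType) (m : nat) (A : {set T}) (r : nat) :=
  [set P : {set {set T}} |
    [&& partition P A, #|P| == r & [forall B in P, #|B| <= m]]].

Lemma imset_preimset (T U : finType) (f : T -> U) (A : {set T}) (C : {set U}) :
  C \subset f @: A -> f @: (f @^-1: C) = C.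
Proof.
move=> sCfA; apply/setP=> y; apply/imsetP/idP => [[x + ->]|yC].
  by rewrite inE.
by have /imsetP[x _ ey] := subsetP sCfA y yC; exists x; rewrite // inE -ey.
Qed.

Lemma bounded_partitions_imset (T U : finType) (f : T -> U) m (A : {set T}) r :
  injective f ->
  bounded_partitions m (f @: A) r =
  [set [set f @: (B : {set T}) | B in (P : {set {set T}})]
     | P in bounded_partitions m A r].
Proof.
move=> injf; have injfs := imset_inj injf.
apply/setP=> Q; apply/idP/imsetP => [|[P + ->]]; last first.
  rewrite !inE (imset_partition _ _ injf) card_imset //.
  case/and3P=> -> -> /forall_inP bP /=.
  by apply/forall_inP=> _ /imsetP[B BP ->]; rewrite card_imset ?bP.
rewrite inE => /and3P[pQ cQ /forall_inP bQ].
have sQ C : C \in Q -> C \subset f @: A.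
  by move=> CQ; rewrite -(cover_partition pQ) bigcup_sup.
pose P := [set f @^-1: (C : {set U}) | C in Q].
have eQ : Q = [set f @: (B : {set T}) | B in P].
  rewrite -imset_comp; apply/setP=> C; apply/idP/imsetP => [CQ|[C' C'Q ->]].
    by exists C; rewrite //= (imset_preimset (sQ C CQ)).
  by rewrite /= (imset_preimset (sQ C' C'Q)).
exists P => //; rewrite inE -(imset_partition _ _ injf) -eQ pQ.
rewrite -(card_imset _ injfs) -eQ cQ /=.
apply/forall_inP=> _ /imsetP[C CQ ->].
by rewrite -(card_imset _ injf) (imset_preimset (sQ C CQ)) bQ.
Qed.

Lemma card_bounded_partitions (T : finType) m (A : {set T}) r :
  #|bounded_partitions m A r| = rstirling m #|A| r.
Proof.
have eA : [set enum_val i | i in [set: 'I_#|A|]] = A.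
  apply/setP=> x; apply/imsetP/idP => [[i _ ->]|xA]; first exact: enum_valP.
  by exists (enum_rank_in xA x); rewrite ?enum_rankK_in.
rewrite -{1}eA bounded_partitions_imset ?card_imset //.
  by do 2 apply: imset_inj; apply: enum_val_inj.
exact: enum_val_inj.
Qed.

Lemma rstirling_eq0 m i r : i < r -> rstirling m i r = 0.
Proof.
move=> lt_ir; apply: eq_card0 => P; rewrite !inE.
apply/negP => /and3P[pP /eqP cP _].
suff: r <= i by rewrite leqNgt lt_ir.
have := card_partition pP; rewrite cardsT card_ord => ->.
rewrite -cP -sum1_card leq_sum // => B BP.
by rewrite card_gt0 (partition_neq0 pP BP).
Qed.

Section Labellings.
Variables (T : finType) (K m : nat).
Implicit Types (A : {set T}) (g : {ffun T -> option 'I_K}).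
Implicit Types (h : {ffun 'I_K -> {set T}}).

Definition label_fibre g j := [set x | g x == Some j].

Definition bounded_labelling g :=
  [forall j, (0 < #|label_fibre g j|) && (#|label_fibre g j| <= m)].

Definition labellings A :=
  [set g | bounded_labelling g & [set x | g x == None] == A].

Definition labelled_cells g := [set label_fibre g j | j in [set: 'I_K]].

Definition fibres g : {ffun 'I_K -> {set T}} := [ffun j => label_fibre g j].

Definition labelling_of h : {ffun T -> option 'I_K} :=
  [ffun x => [pick j | x \in h j]].

Lemma fibres_inj : injective fibres.
Proof.
move=> g1 g2 eg; apply/ffunP => x.
have fibreE g j : (x \in fibres g j) = (g x == Some j) by rewrite ffunE inE.
case E1: (g1 x) => [j|]; first by apply/esym/eqP; rewrite -fibreE -eg fibreE E1.
case E2: (g2 x) => [j|] //.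
by move: (fibreE g2 j); rewrite -eg fibreE E1 E2 eqxx.
Qed.

Lemma labelled_cells_partition A g :
  g \in labellings A -> labelled_cells g \in bounded_partitions m (~: A) K.
Proof.
rewrite inE => /andP[/forallP bg /eqP <-].
have disj : {in [set: 'I_K] &, forall i j, j != i ->
              [disjoint label_fibre g i & label_fibre g j]}.
  move=> i j _ _ nji; rewrite -setI_eq0; apply/eqP/setP => x; rewrite !inE.
  case: (g x) => // a; apply/negbTE/andP => -[/eqP[->] /eqP[eij]].
  by rewrite eij eqxx in nji.
have ne j : j \in [set: 'I_K] -> label_fibre g j != set0.
  by rewrite -card_gt0; case/andP: (bg j).
have [pP injB] := indexed_partition disj ne.
have -> : ~: [set x | g x == None] = cover (labelled_cells g).
  apply/setP => x; rewrite cover_imset !inE; apply/idP/bigcupP => [|[j _]].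
    by case E: (g x) => [j|] // _; exists j; rewrite ?inE ?E.
  by rewrite inE => /eqP ->.
rewrite inE pP card_in_imset // cardsT card_ord eqxx /=.
by apply/forall_inP => _ /imsetP[j _ ->]; case/andP: (bg j).
Qed.

Lemma label_fibre_labelling_of h j :
  (forall i j, i != j -> [disjoint h i & h j]) ->
  label_fibre (labelling_of h) j = h j.
Proof.
move=> disj; apply/setP => x; rewrite !inE ffunE.
case: pickP => [i xi|-> //].
case: (eqVneq i j) => [<- | nij]; first by rewrite eqxx xi.
by rewrite (inj_eq Some_inj) (negPf nij) (disjointFr (disj _ _ nij) xi).
Qed.

Section CellsOfPartition.
Variables (A : {set T}) (Q : {set {set T}}).
Hypothesis QP : Q \in bounded_partitions m (~: A) K.

Lemma labelling_of_cells h : h \in ffun_on (mem Q) -> injectiveb h ->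
  [/\ labelling_of h \in labellings A, labelled_cells (labelling_of h) = Q
    & fibres (labelling_of h) = h].
Proof.
move: QP; rewrite inE => /and3P[pQ /eqP cQ /forall_inP bQ].
move=> /ffun_onP hQ /injectiveP injh.
have disj i j : i != j -> [disjoint h i & h j].
  move=> nij; apply: (trivIsetP (partition_trivIset pQ)); rewrite ?hQ //.
  by apply: contra nij => /eqP /injh ->.
have fibreE := label_fibre_labelling_of _ disj.
have cellsQ : labelled_cells (labelling_of h) = Q.
  apply/eqP; rewrite eqEcard; apply/andP; split.
    by apply/subsetP => _ /imsetP[j _ ->]; rewrite fibreE hQ.
  rewrite cQ card_in_imset ?cardsT ?card_ord // => i j _ _.
  by rewrite !fibreE => /injh.
split=> //; last by apply/ffunP => j; rewrite ffunE fibreE.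
rewrite inE; apply/andP; split.
  apply/forallP => j; rewrite fibreE bQ ?hQ // andbT card_gt0.
  by apply: contraTneq (hQ j) => ->; rewrite (partition0 pQ).
apply/eqP/setP => x; rewrite inE -[x \in A]negbK -in_setC -(cover_partition pQ).
rewrite -cellsQ cover_imset ffunE (eq_bigr _ (fun j _ => fibreE j)).
case: pickP => [j xj | nx]; first by apply/esym/negbF/bigcupP; exists j.
by apply/esym/bigcupP => -[j _]; rewrite nx.
Qed.

Lemma fibres_labellings_with_cells :
  fibres @: [set g in labellings A | labelled_cells g == Q] =
  [set h in ffun_on (mem Q) | injectiveb h].
Proof.
apply/setP => h; apply/imsetP/idP => [[g + ->]|]; last first.
  rewrite inE => /andP[hQ injh].
  have [gA cellsQ fibresK] := labelling_of_cells hQ injh.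
  by exists (labelling_of h); rewrite ?fibresK // inE gA cellsQ eqxx.
rewrite !inE => /andP[/andP[/forallP bg _] /eqP <-]; apply/andP; split.
  by apply/ffun_onP => j; rewrite ffunE imset_f.
apply/injectiveP => i j; rewrite !ffunE => eij.
have /andP[+ _] := bg i; rewrite card_gt0 => /set0Pn[x xi].
have xj : x \in label_fibre g j by rewrite -eij.
by move: xi xj; rewrite !inE => /eqP -> /eqP[].
Qed.

Lemma card_labellings_with_cells :
  #|[set g in labellings A | labelled_cells g == Q]| = K`!.
Proof.
rewrite -(card_imset _ fibres_inj) fibres_labellings_with_cells.
move: QP; rewrite inE => /and3P[_ /eqP cQ _].
by rewrite card_inj_ffuns_on card_ord -ffactnn -cQ.
Qed.

End CellsOfPartition.

Lemma card_labellings A : #|labellings A| = rstirling m #|~: A| K * K`!.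
Proof.
rewrite -card_bounded_partitions -sum_nat_const -sum1_card.
rewrite (partition_big labelled_cells (mem (bounded_partitions m (~: A) K))) /=.
  apply: eq_bigr => Q QP.
  by rewrite -(card_labellings_with_cells QP) sum1dep_card.
by move=> g; apply: labelled_cells_partition.
Qed.

Lemma sum_labellings (F : {set T} -> nat) :
  \sum_g bounded_labelling g * F [set x | g x == None] =
  \sum_A #|labellings A| * F A.
Proof.
rewrite (partition_big (fun g => [set x | g x == None]) predT) //=.
apply: eq_bigr => A _.
rewrite -sum1_card big_distrl big_mkcond [RHS]big_mkcond /=.
apply: eq_bigr => g _; rewrite inE; case: eqP => [->|_]; last by rewrite andbF.
by case: bounded_labelling.
Qed.

End Labellings.

Lemma card_pairs (T1 T2 : finType) (p : pred (T1 * T2)) :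
  #|[set u | p u]| = \sum_x #|[set y | p (x, y)]|.
Proof.
under eq_bigr do rewrite -sum1dep_card.
by rewrite pair_big_dep -sum1dep_card; apply: eq_bigl => -[].
Qed.

Lemma sum_card_subsets (T : finType) (F : nat -> nat) :
  \sum_(A : {set T}) F #|A| = \sum_(i < #|T|.+1) 'C(#|T|, i) * F i.
Proof.
rewrite (partition_big (fun A : {set T} => inord #|A| : 'I_#|T|.+1) predT) //.
apply: eq_bigr => i _; rewrite -(card_draws T i) -sum_nat_const.
apply: eq_big => [A|A /eqP <-]; last by rewrite inordK // ltnS max_card.
by rewrite inE -val_eqE /= inordK // ltnS max_card.
Qed.

Lemma card_mixed_distributions_with_labelling m n k r g :
  #|[set P | @mixed_distribution m n k r (g, P)]| =
  bounded_labelling m g * rstirling m #|[set x | g x == None]| r.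
Proof.
have mdE P : @mixed_distribution m n k r (g, P) =
    (P \in bounded_partitions m [set x | g x == None] r)
    && bounded_labelling m g.
  by rewrite inE /mixed_distribution /= -!andbA.
rewrite -card_bounded_partitions.
have [gb|gNb] := boolP (bounded_labelling m g).
  by rewrite mul1n; apply: eq_card => P; rewrite inE mdE gb andbT.
by rewrite mul0n; apply: eq_card0 => P; rewrite inE mdE (negbTE gNb) andbF.
Qed.

Theorem mainTheorem11 (m n k r : nat) :
  0 < n -> 0 < k -> 0 < r ->
  mixed_rstirling m n k r =
  \sum_(r <= i < n.+1)
     'C(n, i) * rstirling m i r * rstirling m (n - i) (k - 1) * (k - 1)`!.
Proof.
move=> _ _ _.
rewrite /mixed_rstirling card_pairs.
under eq_bigr do rewrite card_mixed_distributions_with_labelling.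
rewrite (sum_labellings _ m (fun A => rstirling m #|A| r)).
under eq_bigr => A _ do rewrite card_labellings [#|~: A|]cardsCs setCK card_ord.
rewrite (sum_card_subsets _
  (fun i => rstirling m (n - i) (k - 1) * (k - 1)`! * rstirling m i r)).
rewrite card_ord big_geq_mkord [RHS]big_mkcond; apply: eq_bigr => i _.
case: leqP => [_|lt_ir]; first by rewrite [_ * rstirling m i r]mulnC !mulnA.
by rewrite (rstirling_eq0 _ lt_ir) !muln0.
Qed.
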